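(* Let $\Lambda$ be a block of bounded weights. The map $a\lambda b\mapsto\mathrm{cl}(a\lambda b)$ is a degree-preserving bijection between the set of oriented circle diagrams with underlying weight in $\Lambda$ and the set of closed oriented circle diagrams with underlying weight in $\mathrm{cl}(\Lambda)$.
   Context: A number line carries vertices indexed by consecutive integers. A weight labels each vertex by $\circ,\times,\vee,\wedge$; bounded if finitely many vertices. A block is an equivalence class of weights under permuting $\vee$'s and $\wedge$'s. Cup diagrams: finitely many non-crossing cups joining pairs of vertices and rays down to infinity; cap diagrams similarly upward; $c^*$ mirror image. $c\lambda$ is an oriented cup diagram if free vertices are $\circ/\times$, cups have one $\vee$ and one $\wedge$ end, ray vertices are $\vee/\wedge$, and no two rays are labelled $\vee,\wedge$ in that order left to right; $\lambda c$ (cap diagram) oriented iff $c^*\lambda$ is. Degree: number of clockwise cups/caps (left end $\wedge$). Oriented circle diagram $a\lambda b$: $a\lambda$ and $\lambda b$ oriented; $\deg(a\lambda b)=\deg(a\lambda)+\deg(\lambda b)$; closed if no rays. $\underline\lambda$: unique cup diagram with $\underline\lambda\lambda$ oriented of degree $0$; $\overline\lambda=(\underline\lambda)^*$. If $a\lambda b$ is oriented with $\lambda\in\Lambda$, then $a=\underline\alpha$, $b=\overline\beta$ for unique $\alpha,\beta\in\Lambda$. Closure: if weights in $\Lambda$ have $p$ labels $\wedge$ and $q$ labels $\vee$, $\mathrm{cl}(\lambda)$ adds $p$ vertices labelled $\vee$ at the left end and $q$ labelled $\wedge$ at the right end; for $\alpha,\beta\in\Lambda$, $\mathrm{cl}(\underline\alpha):=\underline{\mathrm{cl}(\alpha)}$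 and $\mathrm{cl}(\overline\beta):=\overline{\mathrm{cl}(\beta)}$; and $\mathrm{cl}(a\lambda b):=\mathrm{cl}(a)\mathrm{cl}(\lambda)\mathrm{cl}(b)$. *)

From HB Require Import structures.
From mathcomp Require Import all_boot all_order all_fingroup.
Set Implicit Arguments. Unset Strict Implicit. Unset Printing Implicit Defensive.

(** Vertex labels of a weight: circ, cross, vee (down), wedge (up). *)
Inductive label := Circ | Cross | Vee | Wedge.

Definition lab2o (l : label) : 'I_4 :=
  match l with Circ => inord 0 | Cross => inord 1 | Vee => inord 2 | Wedge => inord 3 end.
Definition o2lab (i : 'I_4) : label :=
  match val i with 0 => Circ | 1 => Cross | 2 => Vee | _ => Wedge end.
Lemma lab2oK : cancel lab2o o2lab.
Proof. by case; rewrite /o2lab /= inordK. Qed.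
HB.instance Definition _ := Finite.copy label (can_type lab2oK).

Definition weight n := {ffun 'I_n -> label}.

(** Cup (or cap) diagrams on vertices 0..n-1: each vertex is
    free (None), the end of a ray (Some None), or the end of a cup/cap
    whose other end is j (Some (Some j)).  A cap diagram is stored as its
    mirror image c^* (a cup diagram), which has the same data. *)
Definition cdiag n := {ffun 'I_n -> option (option 'I_n)}.

Definition is_diag n (c : cdiag n) : bool :=
  [forall i, forall j, (c i == Some (Some j)) ==>
      ((i != j) && (c j == Some (Some i)))] &&
  (* non-crossing: nothing strictly inside a cup crosses it, and no ray
     starts strictly inside a cup *)
  [forall i, forall j, forall k : 'I_n, ((c i == Some (Some j)) && (i < k < j)) ==>
      match c k with
      | None => true
      | Some None => false
      | Some (Some l) => (i < l < j)
      end].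

Definition oriented n (c : cdiag n) (la : weight n) : bool :=
  [forall i, match c i with
             | None => la i \in [:: Circ; Cross]
             | Some None => la i \in [:: Vee; Wedge]
             | Some (Some j) => [&& la i \in [:: Vee; Wedge],
                                    la j \in [:: Vee; Wedge] & la i != la j]
             end] &&
  [forall i : 'I_n, forall j : 'I_n, ((i < j) && (c i == Some None) && (c j == Some None)) ==>
      ~~ ((la i == Vee) && (la j == Wedge))].

(** degree: number of clockwise cups (left end labelled wedge). *)
Definition deg n (c : cdiag n) (la : weight n) : nat :=
  #|[pred i : 'I_n | if c i is Some (Some j) then (i < j) && (la i == Wedge)
                     else false]|.

Definition no_rays n (c : cdiag n) : bool := [forall i, c i != Some None].

(** underline lambda: the unique cup diagram c with c lambda oriented of
    degree 0 (defined by choice over the finite type of diagrams); the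
    cap diagram overline lambda = (underline lambda)^* has the same data. *)
Definition underline n (la : weight n) : cdiag n :=
  odflt [ffun _ => None]
    [pick c : cdiag n | [&& is_diag c, oriented c la & deg c la == 0]].

Definition block n (l0 : weight n) : {set weight n} :=
  [set mu : weight n | [exists s : {perm 'I_n},
     [forall i, (l0 i \in [:: Circ; Cross]) ==> (s i == i)] &&
     [forall i, mu i == l0 (s i)]]].

Definition count_lab n (x : label) (la : weight n) : nat := #|[pred i | la i == x]|.

(** closure: add p vees at the left end and q wedges at the right end. *)
Definition cl n p q (la : weight n) : weight (p + n + q) :=
  [ffun i => match split i with
             | inr _ => Wedge
             | inl j => match split j with inl _ => Vee | inr k => la k end
             end].

(** Oriented circle diagrams a lambda b with weight in L
    (triples ((a, lambda), b); b stored as b^* ). *)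
Definition ocd n (L : {set weight n}) : {set cdiag n * weight n * cdiag n} :=
  [set x | [&& is_diag x.1.1, is_diag x.2, x.1.2 \in L,
               oriented x.1.1 x.1.2 & oriented x.2 x.1.2]].

Definition closed_ocd n (L : {set weight n}) : {set cdiag n * weight n * cdiag n} :=
  [set x in ocd L | no_rays x.1.1 && no_rays x.2].

Definition ocd_deg n (x : cdiag n * weight n * cdiag n) : nat :=
  deg x.1.1 x.1.2 + deg x.2 x.1.2.

(** cl(a lambda b) = cl(a) cl(lambda) cl(b), where for a = underline alpha,
    cl(a) = underline (cl alpha), and for b = overline beta,
    cl(b) = overline (cl beta), alpha, beta in L. *)
Definition clD n p q (L : {set weight n}) (x : cdiag n * weight n * cdiag n)
  : cdiag (p + n + q) * weight (p + n + q) * cdiag (p + n + q) :=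
  let la := cl p q x.1.2 in
  match [pick al in L | underline al == x.1.1],
        [pick be in L | underline be == x.2] with
  | Some al, Some be => (underline (cl p q al), la, underline (cl p q be))
  | _, _ => (underline la, la, underline la)
  end.

From mathcomp Require Import all_boot all_order all_fingroup.
From mathcomp Require Import zify.
Set Implicit Arguments. Unset Strict Implicit. Unset Printing Implicit Defensive.

(* A cup diagram is [underline mu] exactly when it orients [mu] with degree 0, i.e.
   every cup has its vee on the left; such a diagram exists and is unique, as one
   sees by repeatedly cupping an adjacent pair vee ... wedge with no vee or wedge in
   between.  For [alpha] in the block, [underline (cl alpha)] has no rays: a wedge
   ray at [t] would need every vee left of [t] cupped to a distinct wedge left of
   [t], which the [p] leading vees of [cl alpha] make impossible (symmetrically for
   vee rays).  Restricting it to the original vertices, cups leaving them becoming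
   rays, gives back [underline alpha].  Two weights of one block orienting the same
   cup diagram agree on its rays: they have equally many wedges, cups carry exactly
   one wedge each, and along the rays all wedges precede all vees.  Hence
   orientations and degrees transfer between [a lambda b] and its closure, and
   restriction inverts the closure map on oriented circle diagrams. *)

(* The [eqType] of [label] is transported from ['I_4], so [==] does not reduce on
   constructors; [label_eqE] replaces it by a computable test. *)
Definition label_eqb (x y : label) : bool :=
  match x, y with
  | Circ, Circ | Cross, Cross | Vee, Vee | Wedge, Wedge => true
  | _, _ => false
  end.

Lemma label_eqE x y : (x == y) = label_eqb x y.
Proof. by apply/eqP/idP; case: x; case: y. Qed.

Definition arrow (l : label) : bool := (l == Vee) || (l == Wedge).

Lemma arrow_cases l : arrow l -> l = Vee \/ l = Wedge.
Proof. by rewrite /arrow !label_eqE; case: l; auto. Qed.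

Lemma arrowV : arrow Vee. Proof. by rewrite /arrow !label_eqE. Qed.
Lemma arrowW : arrow Wedge. Proof. by rewrite /arrow !label_eqE. Qed.

Lemma in_arrow_labels l : (l \in [:: Vee; Wedge]) = arrow l.
Proof. by rewrite /arrow !inE !label_eqE; case: l. Qed.

Lemma in_free_labels l : (l \in [:: Circ; Cross]) = ~~ arrow l.
Proof. by rewrite /arrow !inE !label_eqE; case: l. Qed.

Lemma arrow_third x y z : arrow x -> arrow y -> arrow z -> x != y -> x != z -> y = z.
Proof. by do 3![move=> /arrow_cases [] ->]; rewrite ?label_eqE. Qed.

Section Diagrams.
Variable n : nat.
Implicit Types (c : cdiag n) (b : weight n) (i j k : 'I_n).

Lemma cup_sym c i j : is_diag c -> c i = Some (Some j) ->
  c j = Some (Some i) /\ i != j.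
Proof.
case/andP=> /forallP /(_ i) /forallP /(_ j) /implyP + _ Hij.
by rewrite Hij eqxx => /(_ isT) /andP [ne /eqP].
Qed.

Lemma cup_nested c i j k : is_diag c -> c i = Some (Some j) -> i < k < j ->
  match c k with None => true | Some None => false | Some (Some l) => i < l < j end.
Proof.
case/andP=> _ /forallP /(_ i) /forallP /(_ j) /forallP /(_ k) /implyP + Hij Hk.
by rewrite Hij eqxx Hk => /(_ isT).
Qed.

Lemma cup_no_ray_inside c i j k : is_diag c -> c i = Some (Some j) -> i < k < j ->
  c k <> Some None.
Proof. by move=> Hd Hij Hk Ek; have := cup_nested Hd Hij Hk; rewrite Ek. Qed.

Lemma is_diagI c :
  (forall i j, c i = Some (Some j) -> c j = Some (Some i) /\ i != j) ->
  (forall i j k, c i = Some (Some j) -> i < k < j ->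
     match c k with None => true | Some None => false | Some (Some l) => i < l < j end) ->
  is_diag c.
Proof.
move=> Hsym Hnest; apply/andP; split; apply/forallP=> i; apply/forallP=> j.
  by apply/implyP=> /eqP /Hsym [-> ->]; rewrite eqxx.
by apply/forallP=> k; apply/implyP=> /andP [/eqP Hij Hk]; exact: Hnest Hij Hk.
Qed.

Lemma oriented_free c b i : oriented c b -> c i = None -> ~~ arrow (b i).
Proof. by case/andP=> /forallP /(_ i) + _ E; rewrite E in_free_labels. Qed.

Lemma oriented_ray c b i : oriented c b -> c i = Some None -> arrow (b i).
Proof. by case/andP=> /forallP /(_ i) + _ E; rewrite E in_arrow_labels. Qed.

Lemma oriented_cup c b i j : oriented c b -> c i = Some (Some j) ->
  [/\ arrow (b i), arrow (b j) & b i != b j].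
Proof.
by case/andP=> /forallP /(_ i) + _ E; rewrite E !in_arrow_labels => /and3P [-> -> ->].
Qed.

Lemma oriented_rays c b i j : oriented c b -> c i = Some None -> c j = Some None ->
  i < j -> b i = Vee -> b j = Wedge -> False.
Proof.
case/andP=> _ /forallP /(_ i) /forallP /(_ j) /implyP + Ei Ej lij bi bj.
by rewrite Ei Ej lij bi bj !eqxx => /(_ isT).
Qed.

Lemma oriented_arrow c b i : oriented c b -> arrow (b i) -> c i <> None.
Proof. by move=> Ho Hi Ei; move: (oriented_free Ho Ei); rewrite Hi. Qed.

Lemma orientedI c b :
  (forall i, c i = None -> ~~ arrow (b i)) ->
  (forall i, c i = Some None -> arrow (b i)) ->
  (forall i j, c i = Some (Some j) -> [/\ arrow (b i), arrow (b j) & b i != b j]) ->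
  (forall i j, c i = Some None -> c j = Some None -> i < j ->
     b i = Vee -> b j = Wedge -> False) ->
  oriented c b.
Proof.
move=> Hfree Hray Hcup Hrays; apply/andP; split; apply/forallP=> i.
  case E: (c i) => [[j|]|]; rewrite ?in_free_labels ?in_arrow_labels.
  - by case: (Hcup _ _ E) => -> -> ->.
  - exact: Hray.
  - exact: Hfree.
apply/forallP=> j; apply/implyP=> /andP [/andP [lij /eqP Ei] /eqP Ej].
by apply/negP=> /andP [/eqP bi /eqP bj]; apply: (Hrays i j).
Qed.

Lemma deg_eq0P c b :
  deg c b = 0 <-> (forall i j, c i = Some (Some j) -> i < j -> b i != Wedge).
Proof.
split=> [/card0_eq H i j E lij | H].
  by move: (H i); rewrite !inE /= E lij /= => ->.
apply: eq_card0 => i; rewrite !inE /=.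
case E: (c i) => [[j|]|] //; apply/negP => /andP [lij bi].
by move: (H _ _ E lij); rewrite bi.
Qed.

Definition deg0 c b := [/\ is_diag c, oriented c b & deg c b = 0].

Lemma deg0_cup c b i j : deg0 c b -> c i = Some (Some j) -> i < j ->
  b i = Vee /\ b j = Wedge.
Proof.
case=> _ Ho /deg_eq0P Hdeg E lij; have := Hdeg _ _ E lij.
by case: (oriented_cup Ho E) => /arrow_cases [] -> /arrow_cases [] ->; rewrite ?label_eqE.
Qed.

Lemma deg0_cup_right c b i j : deg0 c b -> c i = Some (Some j) -> j < i ->
  b j = Vee /\ b i = Wedge.
Proof. by move=> H E lji; have [Hd _ _] := H; exact: deg0_cup H (cup_sym Hd E).1 lji. Qed.

Lemma deg0_cup_ltE c b i j : deg0 c b -> c i = Some (Some j) -> (i < j) = (b i == Vee).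
Proof.
move=> H E; have [Hd _ _] := H; have [_ nij] := cup_sym Hd E.
case: (ltngtP i j) => [lij|lji|/val_inj eij]; last by rewrite eij eqxx in nij.
  by rewrite (deg0_cup H E lij).1 eqxx.
by rewrite (deg0_cup_right H E lji).2 label_eqE.
Qed.

Lemma deg0_adjacent_cup c b i j : deg0 c b -> b i = Vee -> b j = Wedge -> i < j ->
  (forall k, i < k < j -> ~~ arrow (b k)) -> c i = Some (Some j).
Proof.
move=> H bi bj lij Hbetween; have [Hd Ho _] := H.
have ai : arrow (b i) by rewrite bi arrowV.
have aj : arrow (b j) by rewrite bj arrowW.
have between_free k : i < k < j -> c k = None.
  move=> hk; case E: (c k) => [[l|]|] //; move: (Hbetween k hk).
    by have [-> _ _] := oriented_cup Ho E.
  by rewrite (oriented_ray Ho E).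
have partner_outside k l : c k = Some (Some l) -> i < l < j -> False.
  by move=> Ek /between_free El; have [] := cup_sym Hd Ek; rewrite El.
have lt_partner_j l : c j = Some (Some l) -> l < j.
  move=> Ej; have [_ njl] := cup_sym Hd Ej.
  by rewrite ltn_neqAle leqNgt (deg0_cup_ltE H Ej) bj label_eqE eq_sym njl.
case Ei: (c i) => [[l|]|]; last by case: (oriented_arrow Ho ai).
- have lil : i < l by rewrite (deg0_cup_ltE H Ei) bi eqxx.
  case: (ltngtP l j) => [llj|ljl|/val_inj -> //].
    by case: (partner_outside _ _ Ei); rewrite lil.
  have := cup_nested Hd Ei (k:=j); rewrite lij ljl => /(_ isT).
  case Ej: (c j) => [[m|]|] //=; last by case: (oriented_arrow Ho aj).
  by case/andP=> lim _; case: (partner_outside _ _ Ej); rewrite lim (lt_partner_j _ Ej).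
- case Ej: (c j) => [[m|]|]; last by case: (oriented_arrow Ho aj).
    have [Em _] := cup_sym Hd Ej; have lmj := lt_partner_j _ Ej.
    case: (ltngtP m i) => [lmi|lim|/val_inj emi]; last by rewrite emi Ei in Em.
      by case: (cup_no_ray_inside Hd Em (k:=i)); rewrite ?lmi.
    by case: (partner_outside _ _ Ej); rewrite lim.
  by case: (oriented_rays Ho Ei Ej lij bi bj).
Qed.

Lemma exists_adjacent_vee_wedge b i j : b i = Vee -> b j = Wedge -> i < j ->
  exists i' j', [/\ b i' = Vee, b j' = Wedge, i' < j'
                  & forall k, i' < k < j' -> ~~ arrow (b k)].
Proof.
have [d] := ubnP (j - i); elim: d i j => // d IH i j ltd bi bj lij.
case: (boolP [exists k : 'I_n, (i < k < j) && arrow (b k)]); last first.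
  move=> /existsPn Hk; exists i, j; split=> // k hk.
  by move: (Hk k); rewrite hk.
case/existsP=> k /andP [/andP [lik lkj] /arrow_cases [] bk].
- by apply: (IH k j) => //; lia.
- by apply: (IH i k) => //; lia.
Qed.

Definition erase_pair b i j : weight n :=
  [ffun k => if (k == i) || (k == j) then Circ else b k].
Definition erase_cup c i j : cdiag n :=
  [ffun k => if (k == i) || (k == j) then None else c k].
Definition insert_cup c i j : cdiag n :=
  [ffun k => if k == i then Some (Some j) else if k == j then Some (Some i) else c k].

Lemma erase_pair_out b i j k : k != i -> k != j -> erase_pair b i j k = b k.
Proof. by move=> ki kj; rewrite ffunE (negPf ki) (negPf kj). Qed.

Lemma card_arrows_erase b i j : arrow (b i) ->
  #|[pred k | arrow (erase_pair b i j k)]| < #|[pred k | arrow (b k)]|.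
Proof.
move=> ai; apply: proper_card; apply/properP; split.
  apply/subsetP=> k; rewrite !inE /= ffunE; case: ifP => // _.
  by rewrite /arrow !label_eqE.
by exists i; rewrite !inE /= ?ffunE ?eqxx // /arrow !label_eqE.
Qed.

Lemma insert_erase_cup c i j : is_diag c -> c i = Some (Some j) ->
  insert_cup (erase_cup c i j) i j = c.
Proof.
move=> Hd Ei; have [Ej _] := cup_sym Hd Ei.
apply/ffunP=> k; rewrite !ffunE.
case: (eqVneq k i) => [->|_]; first by rewrite Ei.
by case: (eqVneq k j) => [->|_]; rewrite ?Ej.
Qed.

Lemma cup_ends_disjoint c i j k l : is_diag c -> c i = Some (Some j) ->
  c k = Some (Some l) -> (k == i) || (k == j) = false -> (l == i) || (l == j) = false.
Proof.
move=> Hd Ei Ek; apply: contraFF => /orP [] /eqP el; have [El _] := cup_sym Hd Ek.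
  by rewrite el Ei in El; case: El => ->; rewrite eqxx orbT.
by have [Ej _] := cup_sym Hd Ei; rewrite el Ej in El; case: El => ->; rewrite eqxx.
Qed.

Lemma deg0_erase c b i j : deg0 c b -> c i = Some (Some j) ->
  deg0 (erase_cup c i j) (erase_pair b i j).
Proof.
move=> [Hd Ho Hdeg] Ei; have Hnot := cup_ends_disjoint Hd Ei.
split.
- apply: is_diagI => [k l|k l m]; rewrite !ffunE; case: ifP => // hk Ek.
    by rewrite (Hnot _ _ Ek hk); exact: cup_sym Hd Ek.
  by move=> hm; case: ifP => // _; exact: cup_nested Hd Ek hm.
- apply: orientedI => [k|k|k l|k l]; rewrite !ffunE.
  + by case: ifP => [_ _|_ Ek]; [rewrite /arrow !label_eqE | exact: oriented_free Ho Ek].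
  + by case: ifP => // _; apply: oriented_ray.
  + by case: ifP => // hk Ek; rewrite (Hnot _ _ Ek hk); exact: oriented_cup Ho Ek.
  + by case: ifP => // _ Ek; case: ifP => // _ El; exact: oriented_rays Ho Ek El.
- apply/deg_eq0P => k l; rewrite !ffunE; case: ifP => // _ Ek lkl.
  exact: (proj1 (deg_eq0P _ _) Hdeg) _ _ Ek lkl.
Qed.

Lemma deg0_insert c b i j : b i = Vee -> b j = Wedge -> i < j ->
  (forall k, i < k < j -> ~~ arrow (b k)) ->
  deg0 c (erase_pair b i j) -> deg0 (insert_cup c i j) b.
Proof.
move=> bi bj lij Hbetween [Hd Ho Hdeg].
have nij : i != j by rewrite neq_ltn lij.
have free_erased k : (k == i) || (k == j) -> c k = None.
  move=> hk; case E: (c k) => [[l|]|] //.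
    by have [+ _ _] := oriented_cup Ho E; rewrite ffunE hk /arrow !label_eqE.
  by have := oriented_ray Ho E; rewrite ffunE hk /arrow !label_eqE.
have free_between k : i < k < j -> c k = None.
  move=> hk; have nk : (k == i) || (k == j) = false.
    by apply/negbTE; rewrite negb_or !neq_ltn; case/andP: hk => -> ->; rewrite orbT.
  case E: (c k) => [[l|]|] //; move: (Hbetween k hk).
    by have [+ _ _] := oriented_cup Ho E; rewrite ffunE nk => ->.
  by have := oriented_ray Ho E; rewrite ffunE nk => ->.
have partner_not k l : c k = Some (Some l) -> (l != i) && (l != j).
  move=> Ek; have [El _] := cup_sym Hd Ek.
  by rewrite -negb_or; apply/negP=> /free_erased; rewrite El.
split.
- apply: is_diagI => [k l|k l m]; rewrite !ffunE.
  + case: (eqVneq k i) => [->|ki]; first by case=> <-; rewrite eq_sym (negPf nij) eqxx.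
    case: (eqVneq k j) => [->|kj]; first by case=> <-; rewrite eqxx eq_sym.
    move=> Ek; have /andP [/negPf -> /negPf ->] := partner_not _ _ Ek.
    exact: cup_sym Hd Ek.
  + case: (eqVneq k i) => [->|ki].
      case=> <- /andP [lim lmj].
      have [mi mj] : m != i /\ m != j by rewrite !neq_ltn lim lmj orbT.
      by rewrite (negPf mi) (negPf mj) free_between ?lim.
    case: (eqVneq k j) => [->|kj]; first by case=> <- /andP [h1 h2]; lia.
    move=> Ek hm; have [El _] := cup_sym Hd Ek.
    have /andP [li lj] := partner_not _ _ Ek.
    have nk : ~~ (i < k < j) by apply/negP=> /free_between; rewrite Ek.
    have nl : ~~ (i < l < j) by apply/negP=> /free_between; rewrite El.
    case: (eqVneq m i) => [em|mi]; first by subst m; move: lij hm nl lj; rewrite neq_ltn /=; lia.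
    case: (eqVneq m j) => [em|mj]; last exact: cup_nested Hd Ek hm.
    by subst m; move: lij hm nk ki; rewrite neq_ltn /=; lia.
- apply: orientedI => [k|k|k l|k l]; rewrite ffunE.
  + case: eqVneq => // ki; case: eqVneq => // kj Ek.
    by have := oriented_free Ho Ek; rewrite erase_pair_out.
  + case: eqVneq => // ki; case: eqVneq => // kj Ek.
    by have := oriented_ray Ho Ek; rewrite erase_pair_out.
  + case: (eqVneq k i) => [-> [<-]|ki]; first by rewrite bi bj arrowV arrowW label_eqE.
    case: (eqVneq k j) => [-> [<-]|kj Ek]; first by rewrite bi bj arrowV arrowW label_eqE.
    have /andP [li lj] := partner_not _ _ Ek.
    by have := oriented_cup Ho Ek; rewrite !erase_pair_out.
  + case: eqVneq => // ki; case: eqVneq => // kj Ek; rewrite ffunE.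
    case: eqVneq => // li; case: eqVneq => // lj El lkl bk bl.
    by apply: (oriented_rays Ho Ek El lkl); rewrite erase_pair_out.
- apply/deg_eq0P => k l; rewrite ffunE.
  case: (eqVneq k i) => [-> [<-] _|ki]; first by rewrite bi label_eqE.
  case: (eqVneq k j) => [-> [<-] /(ltn_trans lij)|kj Ek lkl]; first by rewrite ltnn.
  by have := (proj1 (deg_eq0P _ _) Hdeg) _ _ Ek lkl; rewrite erase_pair_out.
Qed.

Definition rays_diag b : cdiag n := [ffun k => if arrow (b k) then Some None else None].

Lemma deg0_rays_diag b :
  (forall i j, i < j -> b i = Vee -> b j = Wedge -> False) -> deg0 (rays_diag b) b.
Proof.
move=> sorted_b; split.
- by apply: is_diagI => [i j|i j k]; rewrite ffunE; case: ifP.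
- apply: orientedI => [i|i|i j|i j]; rewrite !ffunE; try by case: (arrow (b i)).
  by case: ifP => // _; case: ifP => // _ _ _; apply: sorted_b.
- by apply/deg_eq0P => i j; rewrite ffunE; case: ifP.
Qed.

Lemma deg0_sorted c b : (forall i j, i < j -> b i = Vee -> b j = Wedge -> False) ->
  deg0 c b -> c = rays_diag b.
Proof.
move=> sorted_b H; have [Hd Ho _] := H; apply/ffunP=> k; rewrite ffunE.
case Ek: (c k) => [[l|]|]; last by rewrite (negPf (oriented_free Ho Ek)).
  case: (ltngtP k l) => [lkl|llk|/val_inj ekl].
  - by have [bk bl] := deg0_cup H Ek lkl; case: (sorted_b _ _ lkl bk bl).
  - by have [bl bk] := deg0_cup_right H Ek llk; case: (sorted_b _ _ llk bl bk).
  - by have [_] := cup_sym Hd Ek; rewrite ekl eqxx.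
by rewrite (oriented_ray Ho Ek).
Qed.

Lemma deg0_exists_unique b : exists c, deg0 c b /\ forall c', deg0 c' b -> c' = c.
Proof.
have [d] := ubnP #|[pred k | arrow (b k)]|; elim: d b => // d IH b ltd.
case: (boolP [exists i : 'I_n, exists j : 'I_n,
                [&& i < j, b i == Vee & b j == Wedge]]); last first.
  move=> /existsPn no_pair.
  have sorted_b i j : i < j -> b i = Vee -> b j = Wedge -> False.
    by move=> lij bi bj; move: (no_pair i) => /existsPn /(_ j); rewrite lij bi bj !eqxx.
  exists (rays_diag b); split; first exact: deg0_rays_diag.
  by move=> c; apply: deg0_sorted.
case/existsP=> i /existsP [j /and3P [lij /eqP bi /eqP bj]].
have [i' [j' [bi' bj' lij' between]]] := exists_adjacent_vee_wedge bi bj lij.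
have ltd' : #|[pred k | arrow (erase_pair b i' j' k)]| < d.
  by apply: leq_trans (card_arrows_erase j' _) ltd; rewrite bi' arrowV.
have [c [Hc Huniq]] := IH _ ltd'.
exists (insert_cup c i' j'); split; first exact: deg0_insert.
move=> c' H'; have [Hd' _ _] := H'.
have Ec' := deg0_adjacent_cup H' bi' bj' lij' between.
by rewrite -(insert_erase_cup Hd' Ec') (Huniq _ (deg0_erase H' Ec')).
Qed.

Lemma underline_deg0 b : deg0 (underline b) b.
Proof.
rewrite /underline; case: pickP => [c /and3P [? ? /eqP ?] //|none_deg0].
have [c [[Hd Ho Hdeg] _]] := deg0_exists_unique b.
by have := none_deg0 c; rewrite Hd Ho Hdeg eqxx.
Qed.

Lemma deg0_underline c b : deg0 c b -> underline b = c.
Proof.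
move=> H; have [c0 [_ Huniq]] := deg0_exists_unique b.
by rewrite (Huniq _ H) (Huniq _ (underline_deg0 b)).
Qed.

End Diagrams.

Section Counting.
Variable m : nat.
Implicit Types (P : pred 'I_m) (c : cdiag m) (b : weight m) (i j k r t : 'I_m).

Definition count_in P x b : nat := \sum_(i : 'I_m) (P i && (b i == x)).

Lemma count_labE x b : count_lab x b = count_in predT x b.
Proof.
rewrite /count_lab -sum1_card big_mkcond /=; apply: eq_bigr => i _.
by rewrite inE; case: (b i == x).
Qed.

Lemma count_in_le P x b : count_in P x b <= count_lab x b.
Proof. by rewrite count_labE; apply: leq_sum => i _; case: (P i). Qed.

Lemma count_in_all P x b : (forall i, P i) -> count_in P x b = count_lab x b.
Proof. by move=> HP; rewrite count_labE; apply: eq_bigr => i _; rewrite HP. Qed.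

Lemma sum_bool_sub (P Q : pred 'I_m) t : (forall i, P i -> Q i) -> ~~ P t -> Q t ->
  \sum_(i : 'I_m) (P i : nat) < \sum_(i : 'I_m) (Q i : nat).
Proof.
move=> PQ Pt Qt; rewrite (bigD1 t) //= [X in _ < X](bigD1 t) //= (negPf Pt) Qt.
by rewrite add0n add1n ltnS; apply: leq_sum => i _; case: (boolP (P i)) => // /PQ ->.
Qed.

Lemma count_in_lt P x b t : b t = x -> ~~ P t -> count_in P x b < count_lab x b.
Proof.
move=> bt Pt; rewrite count_labE; apply: (@sum_bool_sub _ _ t).
- by move=> i /andP [].
- by rewrite negb_and Pt.
- by rewrite bt eqxx.
Qed.

Lemma sum_bool_all P : (forall i, P i) -> \sum_(i : 'I_m) (P i : nat) = m.
Proof. by move=> HP; rewrite -[RHS]card_ord -sum1_card; apply: eq_bigr => i _; rewrite HP. Qed.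

Lemma sum_bool_none P : (forall i, ~~ P i) -> \sum_(i : 'I_m) (P i : nat) = 0.
Proof. by move=> HP; apply: big1 => i _; rewrite (negPf (HP i)). Qed.

Lemma sum_bool_lt P t : ~~ P t -> \sum_(i : 'I_m) (P i : nat) < m.
Proof. by move=> Pt; rewrite -[X in _ < X](@sum_bool_all predT) //; apply: sum_bool_sub Pt _. Qed.

Lemma degE c b : deg c b =
  \sum_(i : 'I_m) ((if c i is Some (Some j) then (i < j) && (b i == Wedge) else false) : nat).
Proof.
rewrite /deg -sum1_card big_mkcond /=; apply: eq_bigr => i _; rewrite inE /=.
by case: (c i) => [[j|]|] //; case: ((i < j) && (b i == Wedge)).
Qed.

Definition partner c i : 'I_m := if c i is Some (Some j) then j else i.

Lemma partner_inj c : is_diag c -> injective (partner c).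
Proof.
move=> Hd x y; rewrite /partner.
case Ex: (c x) => [[j|]|]; case Ey: (c y) => [[j'|]|] // Exy; subst;
  try have [? _] := cup_sym Hd Ex; try have [? _] := cup_sym Hd Ey; congruence.
Qed.

(* [partner] sends the vees left of a wedge ray injectively to wedges left of it. *)
Lemma deg0_wedge_ray_balance c b t : deg0 c b -> c t = Some None -> b t = Wedge ->
  count_in (fun i => i < t) Vee b <= count_in (fun i => i < t) Wedge b.
Proof.
move=> H Et bt; have [Hd Ho _] := H.
rewrite /count_in [X in _ <= X](reindex_inj (partner_inj Hd)); apply: leq_sum => i _.
case: (boolP ((i < t) && (b i == Vee))) => [/andP [lit /eqP bi]|//].
rewrite /partner; case Ei: (c i) => [[j|]|];
  [|by case: (oriented_rays Ho Ei Et lit bi bt)|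
    by case: (oriented_arrow Ho _ Ei); rewrite bi arrowV].
have lij : i < j by rewrite (deg0_cup_ltE H Ei) bi eqxx.
rewrite (deg0_cup H Ei lij).2 eqxx andbT.
case: (ltngtP j t) => // [ltj|/val_inj ejt]; last by have [] := cup_sym Hd Ei; rewrite ejt Et.
by case: (cup_no_ray_inside Hd Ei (k:=t)); rewrite ?lit ?ltj.
Qed.

Lemma deg0_vee_ray_balance c b t : deg0 c b -> c t = Some None -> b t = Vee ->
  count_in (fun i => t < i) Wedge b <= count_in (fun i => t < i) Vee b.
Proof.
move=> H Et bt; have [Hd Ho _] := H.
rewrite /count_in [X in _ <= X](reindex_inj (partner_inj Hd)); apply: leq_sum => i _.
case: (boolP ((t < i) && (b i == Wedge))) => [/andP [lti /eqP bi]|//].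
rewrite /partner; case Ei: (c i) => [[j|]|];
  [|by case: (oriented_rays Ho Et Ei lti bt bi)|
    by case: (oriented_arrow Ho _ Ei); rewrite bi arrowW].
have [Ej nij] := cup_sym Hd Ei.
have lji : j < i.
  by rewrite ltn_neqAle leqNgt (deg0_cup_ltE H Ei) bi label_eqE eq_sym nij.
rewrite (deg0_cup_right H Ei lji).1 eqxx andbT.
case: (ltngtP t j) => // [ljt|/val_inj ejt]; last by rewrite -ejt Et in Ej.
by case: (cup_no_ray_inside Hd Ej (k:=t)); rewrite ?ljt ?lti.
Qed.

Definition is_cup c k : bool := if c k is Some (Some _) then true else false.
Definition is_ray c k : bool := c k == Some None.

Lemma count_wedge_split c b : oriented c b ->
  count_lab Wedge b = count_in (is_cup c) Wedge b + count_in (is_ray c) Wedge b.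
Proof.
move=> Ho; rewrite count_labE /count_in -big_split; apply: eq_bigr => k _ /=.
rewrite /is_cup /is_ray; case E: (c k) => [[j|]|] //=; rewrite ?addn0 //.
by move: (oriented_free Ho E); rewrite /arrow negb_or => /andP [_ /negPf ->].
Qed.

Lemma double_count_cup_wedge c b : is_diag c -> oriented c b ->
  2 * count_in (is_cup c) Wedge b = \sum_k (is_cup c k : nat).
Proof.
move=> Hd Ho.
have cup_ends k : is_cup c k -> (b k == Wedge) + (b k == Vee) = 1.
  rewrite /is_cup; case E: (c k) => [[j|]|] // _.
  by have [/arrow_cases [] -> _ _] := oriented_cup Ho E; rewrite !label_eqE.
have halves : count_in (is_cup c) Wedge b = count_in (is_cup c) Vee b.
  rewrite /count_in (reindex_inj (partner_inj Hd)); apply: eq_bigr => k _.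
  rewrite /is_cup /partner; case E: (c k) => [[j|]|] //=; rewrite ?E //.
  have [Ej _] := cup_sym Hd E; rewrite Ej /=.
  by have [] := oriented_cup Ho E => /arrow_cases [] -> /arrow_cases [] ->; rewrite !label_eqE.
rewrite mul2n -addnn {2}halves /count_in -big_split; apply: eq_bigr => k _ /=.
by case: (boolP (is_cup c k)) => // /cup_ends.
Qed.

Lemma count_ray_wedge_lt c b1 b2 r : oriented c b1 -> oriented c b2 -> c r = Some None ->
  b1 r = Vee -> b2 r = Wedge ->
  count_in (is_ray c) Wedge b1 < count_in (is_ray c) Wedge b2.
Proof.
move=> Ho1 Ho2 Er b1r b2r.
rewrite /count_in; apply: (@leq_ltn_trans (\sum_k (is_ray c k && (k < r) : nat))).
  apply: leq_sum => k _; case: (boolP (is_ray c k)) => //= /eqP Ek.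
  case: (ltngtP k r) => [_|lrk|/val_inj ->]; [exact: leq_b1| |by rewrite b1r label_eqE].
  by case: eqP => // /(oriented_rays Ho1 Er Ek lrk b1r).
apply: (@sum_bool_sub _ _ r) => [k /andP [/eqP Ek lkr]|/=|]; last by rewrite /is_ray Er b2r !eqxx.
  rewrite /is_ray Ek eqxx /=.
  case/arrow_cases: (oriented_ray Ho2 Ek) => [bk|->]; last by [].
  by case: (oriented_rays Ho2 Ek Er lkr bk b2r).
by rewrite ltnn andbF.
Qed.

Lemma oriented_rays_agree c b1 b2 r : is_diag c -> oriented c b1 -> oriented c b2 ->
  count_lab Wedge b1 = count_lab Wedge b2 -> c r = Some None -> b1 r = b2 r.
Proof.
move=> Hd Ho1 Ho2 same_count Er.
have same_rays : count_in (is_ray c) Wedge b1 = count_in (is_ray c) Wedge b2.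
  move: same_count; rewrite (count_wedge_split Ho1) (count_wedge_split Ho2).
  have := double_count_cup_wedge Hd Ho1; have := double_count_cup_wedge Hd Ho2; lia.
case/arrow_cases: (oriented_ray Ho1 Er) => e1; case/arrow_cases: (oriented_ray Ho2 Er) => e2;
  rewrite e1 e2 //.
- by have := count_ray_wedge_lt Ho1 Ho2 Er e1 e2; rewrite same_rays ltnn.
- by have := count_ray_wedge_lt Ho2 Ho1 Er e2 e1; rewrite same_rays ltnn.
Qed.

End Counting.

Section Closure.
Variables n p q : nat.
Local Notation N := (p + n + q).
Implicit Types (c : cdiag N) (la : weight n) (k l : 'I_n).

Definition lft (i : 'I_p) : 'I_N := lshift q (lshift n i).
Definition mid (k : 'I_n) : 'I_N := lshift q (rshift p k).
Definition rgt (j : 'I_q) : 'I_N := rshift (p + n) j.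

Variant closure_pos_spec (i : 'I_N) : Type :=
  | PosLft (i0 : 'I_p) of i = lft i0
  | PosMid (k : 'I_n) of i = mid k
  | PosRgt (j : 'I_q) of i = rgt j.

Lemma closure_posP i : closure_pos_spec i.
Proof.
case: (split_ordP i) => [i1 ->|j ->]; last exact: PosRgt.
by case: (split_ordP i1) => [i0 ->|k ->]; [exact: PosLft | exact: PosMid].
Qed.

Lemma ltn_mid k l : (mid k < mid l) = (k < l).
Proof. by rewrite /= ltn_add2l. Qed.
Lemma lft_mid i k : lft i < mid k.
Proof. by rewrite /=; have := ltn_ord i; lia. Qed.
Lemma mid_rgt k j : mid k < rgt j.
Proof. by rewrite /=; have := ltn_ord k; lia. Qed.
Lemma lft_rgt i j : lft i < rgt j.
Proof. by rewrite /=; have := ltn_ord i; lia. Qed.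

Lemma cl_lft la i : cl p q la (lft i) = Vee.
Proof. by rewrite ffunE /lft !(unsplitK (inl _ _)). Qed.
Lemma cl_mid la k : cl p q la (mid k) = la k.
Proof. by rewrite ffunE /mid (unsplitK (inl _ _)) (unsplitK (inr _ _)). Qed.
Lemma cl_rgt la j : cl p q la (rgt j) = Wedge.
Proof. by rewrite ffunE /rgt (unsplitK (inr _ _)). Qed.

Definition unmid (j : 'I_N) : option 'I_n :=
  if split j is inl j1 then if split j1 is inr k then Some k else None else None.

Lemma unmid_lft i : unmid (lft i) = None.
Proof. by rewrite /unmid /lft !(unsplitK (inl _ _)). Qed.
Lemma unmid_mid k : unmid (mid k) = Some k.
Proof. by rewrite /unmid /mid (unsplitK (inl _ _)) (unsplitK (inr _ _)). Qed.
Lemma unmid_rgt j : unmid (rgt j) = None.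
Proof. by rewrite /unmid /rgt (unsplitK (inr _ _)). Qed.

Lemma unmid_some z k : unmid z = Some k -> z = mid k.
Proof.
case: (closure_posP z) => [i ->|k' ->|j ->];
  by rewrite ?unmid_lft ?unmid_rgt ?unmid_mid // => -[->].
Qed.

Lemma cl_unmid_none la mu z : unmid z = None -> cl p q la z = cl p q mu z.
Proof. by case: (closure_posP z) => [i ->|k ->|j ->]; rewrite ?cl_lft ?cl_rgt ?unmid_mid. Qed.

(* A cup from [mid k] to a vertex outside the middle block becomes a ray at [k]. *)
Definition restr_diag (c : cdiag N) : cdiag n :=
  [ffun k => if c (mid k) is Some e then Some (obind unmid e) else None].

Definition restr_weight (mu : weight N) : weight n := [ffun k => mu (mid k)].

Lemma restr_weight_cl la : restr_weight (cl p q la) = la.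
Proof. by apply/ffunP=> k; rewrite ffunE cl_mid. Qed.

Lemma sum_closure (F : 'I_N -> nat) : \sum_(i : 'I_N) F i =
  \sum_(i < p) F (lft i) + \sum_(k < n) F (mid k) + \sum_(j < q) F (rgt j).
Proof. by rewrite big_split_ord /= big_split_ord. Qed.

Lemma restr_diag_none c k : restr_diag c k = None -> c (mid k) = None.
Proof. by rewrite ffunE; case: (c (mid k)). Qed.

Lemma restr_diag_cup c k l : restr_diag c k = Some (Some l) -> c (mid k) = Some (Some (mid l)).
Proof.
rewrite ffunE; case: (c (mid k)) => [[j|]|] // [].
case: (closure_posP j) => [i ->|l' ->|j' ->];
  by rewrite ?unmid_lft ?unmid_mid ?unmid_rgt // => -[->].
Qed.

Lemma restr_diag_cupE c k l : c (mid k) = Some (Some (mid l)) -> restr_diag c k = Some (Some l).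
Proof. by rewrite ffunE => ->; rewrite /= unmid_mid. Qed.

Lemma restr_diag_ray c k : restr_diag c k = Some None ->
  c (mid k) = Some None \/ exists2 j, c (mid k) = Some (Some j) & unmid j = None.
Proof.
rewrite ffunE; case: (c (mid k)) => [[j|]|] // E; last by left.
by right; exists j; case: E.
Qed.

Lemma restr_is_diag c : is_diag c -> is_diag (restr_diag c).
Proof.
move=> Hd; apply: is_diagI => [k l /restr_diag_cup E|k l m /restr_diag_cup E hm].
  have [El nkl] := cup_sym Hd E; split; first exact: restr_diag_cupE.
  by apply: contra nkl => /eqP ->.
have := cup_nested Hd E (k:=mid m); rewrite !ltn_mid => /(_ hm).
rewrite ffunE; case: (c (mid m)) => [[j|]|] //.
case: (closure_posP j) => [i ->|l' ->|j' ->];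
  rewrite [obind _ _]/= ?unmid_lft ?unmid_mid ?unmid_rgt ?ltn_mid //.
- by rewrite ltnNge ltnW ?lft_mid.
- by case/andP=> _; rewrite ltnNge ltnW ?mid_rgt.
Qed.

Lemma restr_oriented c la : is_diag c -> no_rays c -> oriented c (cl p q la) ->
  oriented (restr_diag c) la.
Proof.
move=> Hd /forallP Hr Ho.
have no_ray j : c j <> Some None by move/eqP: (Hr j).
apply: orientedI => [k /restr_diag_none E|k|k l /restr_diag_cup E|k l].
- by have := oriented_free Ho E; rewrite cl_mid.
- case/restr_diag_ray => [/no_ray //|[j E _]].
  by have [+ _ _] := oriented_cup Ho E; rewrite cl_mid.
- by have := oriented_cup Ho E; rewrite !cl_mid.
- case/restr_diag_ray => [/no_ray //|[j Ek Uj]]; case/restr_diag_ray => [/no_ray //|[j' El Uj']].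
  move=> lkl bk bl; have [_ _] := oriented_cup Ho Ek; have [_ _] := oriented_cup Ho El.
  rewrite !cl_mid bk bl.
  case: (closure_posP j') El Uj' => [i' ->|? ->|j0 ->] El; rewrite ?unmid_mid // => _;
    rewrite ?cl_lft ?cl_rgt ?label_eqE // => _.
  case: (closure_posP j) Ek Uj => [i ->|? ->|j1 ->] Ek; rewrite ?unmid_mid // => _;
    rewrite ?cl_lft ?cl_rgt ?label_eqE // => _.
  have := cup_nested Hd Ek (k:=mid l); rewrite ltn_mid lkl mid_rgt El => /(_ isT).
  by rewrite ltnNge ltnW ?lft_mid.
Qed.

Lemma deg_cl_restr c la : oriented c (cl p q la) -> deg c (cl p q la) = deg (restr_diag c) la.
Proof.
move=> Ho; rewrite !degE sum_closure.
rewrite big1 => [|i _]; last by case: (c (lft i)) => [[?|]|] //; rewrite cl_lft label_eqE andbF.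
rewrite [X in _ + X]big1 => [|j _]; last first.
  case E: (c (rgt j)) => [[x|]|] //; have [_ _] := oriented_cup Ho E.
  case: (closure_posP x) E => [i ->|k ->|j' ->] E; rewrite ?cl_rgt ?eqxx // => _.
    by rewrite ltnNge ltnW ?lft_rgt.
  by rewrite ltnNge ltnW ?mid_rgt.
rewrite add0n addn0; apply: eq_bigr => k _.
case Er: (restr_diag c k) => [[l|]|].
- by rewrite (restr_diag_cup Er) ltn_mid cl_mid.
- case: (restr_diag_ray Er) => [-> //|[j E]]; rewrite E.
  case: (closure_posP j) E => [i ->|l ->|j' ->] E; rewrite ?unmid_mid // => _.
    by rewrite ltnNge ltnW ?lft_mid.
  by have [_ _] := oriented_cup Ho E; rewrite cl_rgt cl_mid => /negPf ->; rewrite andbF.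
- by rewrite (restr_diag_none Er).
Qed.

Lemma count_in_cl_vee (P : pred 'I_N) la : count_in P Vee (cl p q la) =
  \sum_(i < p) (P (lft i) : nat) + count_in (fun k => P (mid k)) Vee la.
Proof.
rewrite /count_in sum_closure [X in _ + X]big1 ?addn0 => [|j _]; last first.
  by rewrite cl_rgt label_eqE andbF.
by congr (_ + _); apply: eq_bigr => i _; rewrite ?cl_lft ?cl_mid ?eqxx ?andbT.
Qed.

Lemma count_in_cl_wedge (P : pred 'I_N) la : count_in P Wedge (cl p q la) =
  count_in (fun k => P (mid k)) Wedge la + \sum_(j < q) (P (rgt j) : nat).
Proof.
rewrite /count_in sum_closure big1 ?add0n => [|i _]; last first.
  by rewrite cl_lft label_eqE andbF.
by congr (_ + _); apply: eq_bigr => i _; rewrite ?cl_rgt ?cl_mid ?eqxx ?andbT.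
Qed.

Lemma deg0_cl_no_rays c al : count_lab Wedge al = p -> count_lab Vee al = q ->
  deg0 c (cl p q al) -> no_rays c.
Proof.
move=> nW nV H; have [Hd Ho _] := H; apply/forallP => t; apply/eqP => Et.
have not_lt x y : x < y -> (y < x) = false by move=> /ltnW; rewrite leqNgt => /negPf.
case/arrow_cases: (oriented_ray Ho Et) => bt.
- have := deg0_vee_ray_balance H Et bt; rewrite count_in_cl_vee count_in_cl_wedge.
  case: (closure_posP t) bt => [i0 ->|t0 ->|j0 ->] bt; rewrite ?cl_rgt ?cl_mid // in bt.
  + rewrite count_in_all ?nW => [|k]; last exact: lft_mid.
    rewrite sum_bool_all => [|j]; last exact: lft_rgt.
    have := count_in_le (fun k => lft i0 < mid k) Vee al.
    have := @sum_bool_lt _ (fun i => lft i0 < lft i) i0 (negbT (ltnn _)); lia.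
  + rewrite sum_bool_all => [|j]; last exact: mid_rgt.
    rewrite sum_bool_none => [|i]; last by rewrite not_lt ?lft_mid.
    have := @count_in_lt _ (fun k => mid t0 < mid k) _ _ _ bt (negbT (ltnn _)).
    rewrite nV; lia.
- have := deg0_wedge_ray_balance H Et bt; rewrite count_in_cl_vee count_in_cl_wedge.
  case: (closure_posP t) bt => [i0 ->|t0 ->|j0 ->] bt; rewrite ?cl_lft ?cl_mid // in bt.
  + rewrite sum_bool_all => [|i]; last exact: lft_mid.
    rewrite sum_bool_none => [|j]; last by rewrite not_lt ?mid_rgt.
    have := @count_in_lt _ (fun k => mid k < mid t0) _ _ _ bt (negbT (ltnn _)).
    rewrite nW; lia.
  + rewrite sum_bool_all => [|i]; last exact: lft_rgt.
    rewrite count_in_all ?nV => [|k]; last exact: mid_rgt.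
    have := count_in_le (fun k => mid k < rgt j0) Wedge al.
    have := @sum_bool_lt _ (fun j => rgt j < rgt j0) j0 (negbT (ltnn _)); lia.
Qed.

Lemma oriented_cl_transfer c b1 b2 : is_diag c -> no_rays c ->
  oriented c (cl p q b1) -> oriented (restr_diag c) b2 ->
  (forall r, restr_diag c r = Some None -> b1 r = b2 r) -> oriented c (cl p q b2).
Proof.
move=> Hd /forallP Hr Ho Ha agree.
have no_ray z : c z <> Some None by move/eqP: (Hr z).
have cup_out_agree z w : c z = Some (Some w) -> unmid w = None -> cl p q b1 z = cl p q b2 z.
  move=> Ez Uw; case Uz: (unmid z) => [k|]; last exact: cl_unmid_none.
  rewrite (unmid_some Uz) !cl_mid agree // ffunE -(unmid_some Uz) Ez /=.
  by rewrite Uw.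
apply: orientedI => [z Ez|z /no_ray //|z w Ez|z w /no_ray //].
  case Uz: (unmid z) => [k|]; last by rewrite -(cl_unmid_none b1) ?(oriented_free Ho Ez).
  rewrite (unmid_some Uz) cl_mid; apply: (oriented_free Ha).
  by rewrite ffunE -(unmid_some Uz) Ez.
have [Ew _] := cup_sym Hd Ez.
case Uw: (unmid w) => [l|].
  case Uz: (unmid z) => [k|].
    rewrite (unmid_some Uz) (unmid_some Uw) !cl_mid; apply: (oriented_cup Ha).
    by apply: restr_diag_cupE; rewrite -(unmid_some Uz) -(unmid_some Uw).
  by rewrite -(cl_unmid_none b1 _ Uz) -(cup_out_agree _ _ Ew Uz); exact: oriented_cup Ho Ez.
by rewrite -(cl_unmid_none b1 _ Uw) -(cup_out_agree _ _ Ez Uw); exact: oriented_cup Ho Ez.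
Qed.

End Closure.

Section Block.
Variable n : nat.
Implicit Types (a : cdiag n) (la mu : weight n).

Lemma count_lab_block (l0 : weight n) mu x : mu \in block l0 -> count_lab x mu = count_lab x l0.
Proof.
rewrite inE => /existsP [s /andP [_ /forallP Hs]].
rewrite !count_labE /count_in [RHS](reindex_inj (@perm_inj _ s)).
by apply: eq_bigr => i _; rewrite (eqP (Hs i)).
Qed.

Definition anticlockwise a la : weight n :=
  [ffun i => if a i is Some (Some j) then if i < j then Vee else Wedge else la i].

Lemma deg0_anticlockwise a la : is_diag a -> oriented a la -> deg0 a (anticlockwise a la).
Proof.
move=> Hd Ho; split=> //.
- apply: orientedI => [i E|i E|i j E|i j Ei Ej lij].
  + by rewrite ffunE E; apply: oriented_free Ho E.
  + by rewrite ffunE E; apply: oriented_ray Ho E.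
  + have [Ej nij] := cup_sym Hd E; rewrite !ffunE E Ej.
    by case: (ltngtP i j) => h; rewrite /arrow !label_eqE //; rewrite (val_inj h) eqxx in nij.
  + by rewrite !ffunE Ei Ej; apply: oriented_rays Ho Ei Ej lij.
- by apply/deg_eq0P => i j E lij; rewrite ffunE E lij label_eqE.
Qed.

Lemma anticlockwise_perm a la : is_diag a -> oriented a la ->
  exists s : {perm 'I_n}, (forall i, a i = None -> s i = i) /\
                          (forall i, anticlockwise a la i = la (s i)).
Proof.
move=> Hd Ho; set al := anticlockwise a la.
have [_ Hoal _] := deg0_anticlockwise Hd Ho.
(* [flip] exchanges the two ends of every cup on which [la] is clockwise. *)
pose flip i := if a i is Some (Some j) then if la i == al i then i else j else i.
have flipE i : al i = la (flip i).
  rewrite /flip; case E: (a i) => [[j|]|]; try by rewrite ffunE E.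
  case: eqVneq => [//|ne]; have [ai aj nij] := oriented_cup Ho E.
  by have [+ _ _] := oriented_cup Hoal E; move/(arrow_third ai)/(_ aj ne nij).
have flipK : involutive flip.
  move=> i; rewrite {2}/flip; case E: (a i) => [[j|]|]; rewrite /flip ?E //.
  case: eqVneq => [e|ne]; first by rewrite E e eqxx.
  have [Ej _] := cup_sym Hd E; rewrite Ej.
  have [ai aj nij] := oriented_cup Ho E; have [alai _ alne] := oriented_cup Hoal E.
  have laj : la j = al i by apply: (arrow_third ai aj alai nij ne).
  by case: eqVneq => [e|//]; move: alne; rewrite -laj e eqxx.
exists (perm (can_inj flipK)); split=> i; rewrite permE; last exact: flipE.
by rewrite /flip => ->.
Qed.

Lemma deg0_in_block (l0 : weight n) la a : la \in block l0 -> is_diag a -> oriented a la ->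
  exists2 al, al \in block l0 & deg0 a al.
Proof.
move=> Hla Hd Ho; exists (anticlockwise a la); last exact: deg0_anticlockwise.
have [s0 [s0_free s0E]] := anticlockwise_perm Hd Ho.
move: Hla; rewrite !inE => /existsP [s /andP [/forallP Hfix /forallP Hs]].
apply/existsP; exists (s0 * s)%g; apply/andP; split; apply/forallP => i; rewrite permM.
- apply/implyP => hi; have si : s i = i by move/implyP: (Hfix i) => /(_ hi) /eqP.
  have ai : ~~ arrow (la i) by rewrite (eqP (Hs i)) si -in_free_labels.
  rewrite s0_free ?si //; case E: (a i) => [[j|]|] //; move: ai.
    by have [-> _ _] := oriented_cup Ho E.
  by rewrite (oriented_ray Ho E).
- by rewrite s0E; apply: Hs.
Qed.

End Block.

Section Main.
Variables (n : nat) (l0 : weight n).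
Local Notation L := (block l0).
Local Notation p := (count_lab Wedge l0).
Local Notation q := (count_lab Vee l0).
Local Notation N := (p + n + q).
Implicit Types (al be la : weight n) (c : cdiag N).
Implicit Types (x : cdiag n * weight n * cdiag n) (y : cdiag N * weight N * cdiag N).

Lemma deg0_underline_cl_no_rays al : al \in L -> no_rays (underline (cl p q al)).
Proof.
move=> alL; apply: (deg0_cl_no_rays _ _ (underline_deg0 _));
  exact: count_lab_block alL.
Qed.

Lemma restr_underline_cl al : al \in L -> restr_diag (underline (cl p q al)) = underline al.
Proof.
move=> alL; have [Hd Ho Hdeg] := underline_deg0 (cl p q al).
have Hr := deg0_underline_cl_no_rays alL.
apply/esym/deg0_underline; split.
- exact: restr_is_diag.
- exact: restr_oriented.
- by rewrite -deg_cl_restr.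
Qed.

Lemma rays_agree_in_block a al la : al \in L -> la \in L -> is_diag a ->
  oriented a al -> oriented a la -> forall r, a r = Some None -> al r = la r.
Proof.
move=> alL laL Hd Hal Hla r; apply: oriented_rays_agree Hd Hal Hla _.
by rewrite (count_lab_block _ alL) (count_lab_block _ laL).
Qed.

Lemma underline_cl_oriented al la : al \in L -> la \in L ->
  oriented (underline al) la ->
  oriented (underline (cl p q al)) (cl p q la) /\
  deg (underline (cl p q al)) (cl p q la) = deg (underline al) la.
Proof.
move=> alL laL Ho; have [Hd Hoc _] := underline_deg0 (cl p q al).
have [Hda Hoa _] := underline_deg0 al; have Hr := deg0_underline_cl_no_rays alL.
have agree := rays_agree_in_block alL laL Hda Hoa Ho.
rewrite -(restr_underline_cl alL) in agree Ho.
have Hoc' := oriented_cl_transfer Hd Hr Hoc Ho agree.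
by split; rewrite // deg_cl_restr // restr_underline_cl.
Qed.

Lemma underline_cl_restr c al la : al \in L -> la \in L -> is_diag c -> no_rays c ->
  oriented c (cl p q la) -> underline al = restr_diag c -> underline (cl p q al) = c.
Proof.
move=> alL laL Hd Hr Ho ua.
have [Hda Hoa Hdega] := underline_deg0 al; rewrite ua in Hda Hoa Hdega.
have Hor := restr_oriented Hd Hr Ho.
have agree := rays_agree_in_block laL alL Hda Hor Hoa.
have Hoc := oriented_cl_transfer Hd Hr Ho Hoa agree.
by apply: deg0_underline; split; rewrite // deg_cl_restr.
Qed.

Definition restrD y : cdiag n * weight n * cdiag n :=
  (restr_diag y.1.1, restr_weight y.1.2, restr_diag y.2).

Lemma ocdP x : x \in ocd L ->
  [/\ is_diag x.1.1, is_diag x.2, x.1.2 \in L, oriented x.1.1 x.1.2 & oriented x.2 x.1.2].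
Proof. by rewrite inE => /and5P. Qed.

Lemma pick_underline a la : la \in L -> is_diag a -> oriented a la ->
  exists2 al, al \in L & underline al = a /\ [pick al in L | underline al == a] = Some al.
Proof.
move=> laL Hd Ho; case: pickP => [al /andP [alL /eqP ua]|none]; first by exists al.
have [al alL H] := deg0_in_block laL Hd Ho.
by have := none al; rewrite alL (deg0_underline H) eqxx.
Qed.

Lemma clDE x : x \in ocd L -> exists al, exists be,
  [/\ al \in L, be \in L, underline al = x.1.1, underline be = x.2 &
      clD p q L x = (underline (cl p q al), cl p q x.1.2, underline (cl p q be))].
Proof.
case/ocdP=> Hda Hdb laL Hoa Hob.
have [al alL [ua pick_a]] := pick_underline laL Hda Hoa.
have [be beL [ub pick_b]] := pick_underline laL Hdb Hob.
by exists al, be; split=> //; rewrite /clD pick_a pick_b.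
Qed.

Lemma clD_closed x : x \in ocd L ->
  clD p q L x \in closed_ocd (cl p q @: L) /\ ocd_deg (clD p q L x) = ocd_deg x.
Proof.
move=> xL; have [al [be [alL beL ua ub ->]]] := clDE xL.
case/ocdP: xL => _ _ laL Hoa Hob; rewrite -ua in Hoa; rewrite -ub in Hob.
have [Hoa' dega] := underline_cl_oriented alL laL Hoa.
have [Hob' degb] := underline_cl_oriented beL laL Hob.
have [Hda _ _] := underline_deg0 (cl p q al); have [Hdb _ _] := underline_deg0 (cl p q be).
split; last by rewrite /ocd_deg /= dega degb ua ub.
rewrite !inE /= Hda Hdb Hoa' Hob' !deg0_underline_cl_no_rays //=.
by rewrite !andbT; apply/imsetP; exists x.1.2.
Qed.

Lemma clDK : {in ocd L, cancel (clD p q L) restrD}.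
Proof.
move=> [[a la] b] xL; have [al [be [alL beL /= ua ub ->]]] := clDE xL.
by rewrite /restrD /= !restr_underline_cl // ua ub restr_weight_cl.
Qed.

Lemma closed_ocdP c mu d : ((c, mu), d) \in closed_ocd (cl p q @: L) ->
  exists2 la, la \in L & [/\ mu = cl p q la, is_diag c /\ is_diag d,
    oriented c (cl p q la) /\ oriented d (cl p q la) & no_rays c /\ no_rays d].
Proof.
rewrite !inE /= => /andP [/and5P [Hc Hd /imsetP [la laL ->] Hoc Hod] /andP [Hrc Hrd]].
by exists la.
Qed.

Lemma restrD_ocd y : y \in closed_ocd (cl p q @: L) -> restrD y \in ocd L.
Proof.
case: y => [[c mu] d] /closed_ocdP [la laL [-> [Hc Hd] [Hoc Hod] [Hrc Hrd]]].
by rewrite inE /= restr_weight_cl laL !restr_is_diag ?restr_oriented.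
Qed.

Lemma restrDK : {in closed_ocd (cl p q @: L), cancel restrD (clD p q L)}.
Proof.
move=> y yL; have [al [be [alL beL ua ub ->]]] := clDE (restrD_ocd yL).
case: y yL ua ub => [[c mu] d] /closed_ocdP [la laL [-> [Hc Hd] [Hoc Hod] [Hrc Hrd]]] ua ub.
rewrite /restrD /= in ua ub *.
by rewrite restr_weight_cl (underline_cl_restr alL laL Hc Hrc Hoc ua)
           (underline_cl_restr beL laL Hd Hrd Hod ub).
Qed.

End Main.

Theorem lemma4p2 (n : nat) (l0 : weight n) :
  let L := block l0 in
  let p := count_lab Wedge l0 in
  let q := count_lab Vee l0 in
  [/\ {in ocd L &, injective (clD p q L)},
      clD p q L @: ocd L = closed_ocd (cl p q @: L)
    & {in ocd L, forall x, ocd_deg (clD p q L x) = ocd_deg x}].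
Proof.
move=> L p q; split.
- exact: can_in_inj (@clDK n l0).
- apply/eqP; rewrite eqEsubset; apply/andP; split; apply/subsetP.
    by move=> _ /imsetP [x xL ->]; have [] := clD_closed xL.
  by move=> y yL; apply/imsetP; exists (restrD y); rewrite ?restrD_ocd ?restrDK.
- by move=> x xL; have [] := clD_closed xL.
Qed.
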